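(* Let $f_1,\dots,f_d:\mathbb{R}^m\times\mathbb{R}^m\to\mathscr I^{p,q}$ be functions whose values $f_1(\vec x,\vec u),\dots,f_d(\vec x,\vec u)$ are, for every $(\vec x,\vec u)$, mutually coorthogonal blades. For each $l$ let $g_l$ be one of the four maps $\mathscr I^{p,q}\to\mathcal{G}^{p,q}$: $g(h)=e^{h}$, $g(h)=\cos(|h|)$, $g(h)=\frac{h}{|h|}\sin(|h|)$, or $g(h)=0$, where $|h|=\sqrt{-h^2}$. Then for every $\vec{A}\in\mathcal{G}^{p,q}$ and all $\vec x,\vec u\in\mathbb{R}^m$, $$\prod_{l=1}^{d}g_l\big(-f_l(\vec{x},\vec{u})\big)\,\vec{A}=\sum_{\vec{j}\in\{0,1\}^d}\vec{A}_{\vec c^{\vec{j}}(f_1(\vec x,\vec u),\dots,f_d(\vec x,\vec u))}\prod_{l=1}^{d}g_l\big(-(-1)^{j_l}f_l(\vec{x},\vec{u})\big),$$ where the products are ordered with $l$ increasing from left to right.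
   Context: $\mathcal{G}^{p,q}$ is the real geometric algebra of $\mathbb{R}^{p,q}$; $\mathscr I^{p,q}=\{i\in\mathcal{G}^{p,q}: i^2\in\mathbb{R},\ i^2<0\}$ (all such elements are invertible); $e^X=\sum_r X^r/r!$. Blades $\vec A,\vec B$ are coorthogonal if $\vec A\vec B=\pm\vec B\vec A$. For invertible $\vec B$: $\vec{A}_{\vec c^0(\vec{B})}=\frac12(\vec{A}+\vec{B}^{-1}\vec{A}\vec{B})$, $\vec{A}_{\vec c^1(\vec{B})}=\frac12(\vec{A}-\vec{B}^{-1}\vec{A}\vec{B})$, and for invertible $\vec B_1,\dots,\vec B_d$ and $\vec j\in\{0,1\}^d$: $\vec{A}_{\vec c^{\vec{j}}(\vec B_1,\dots,\vec B_d)}=((\vec{A}_{\vec c^{j_1}(\vec{B}_1)})_{\vec c^{j_2}(\vec{B}_2)}\cdots)_{\vec c^{j_d}(\vec{B}_d)}$ (for mutually coorthogonal invertible blades this does not depend on the order). *)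

From HB Require Import structures.
From mathcomp Require Import all_boot all_order all_algebra.
From mathcomp Require Import boolp classical_sets reals topology normedtype sequences trigo.
Set Implicit Arguments. Unset Strict Implicit. Unset Printing Implicit Defensive.
Import Order.TTheory GRing.Theory Num.Theory.
Import numFieldNormedType.Exports.
Local Open Scope ring_scope.

(** Real geometric algebra G^{p,q} of R^{p,q}: basis blades e_A, A ⊆ {0..p+q-1},
    with e_i^2 = +1 for i < p and e_i^2 = -1 for p <= i < p+q. *)
Notation GA R p q := {ffun {set 'I_(p + q)} -> R}.

Section GA.
Variables (R : realType) (p q : nat).
Local Notation n := (p + q)%N.

Local Notation GA := {ffun {set 'I_n} -> R}.

(** sign of e_A e_B = bsign A B * e_{A Δ B} *)
Definition bsign (A B : {set 'I_n}) : R :=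
  (-1) ^+ #|[set ab : 'I_n * 'I_n | [&& ab.1 \in A, ab.2 \in B & (ab.2 < ab.1)%N]]|
  * \prod_(i in A :&: B) (if (i < p)%N then 1 else -1).

Definition symdiff (A B : {set 'I_n}) := (A :\: B) :|: (B :\: A).

Definition gmul (x y : GA) : GA :=
  [ffun C => \sum_(A : {set 'I_n}) \sum_(B : {set 'I_n} | symdiff A B == C)
               bsign A B * x A * y B].

Definition gwedge (x y : GA) : GA :=
  [ffun C => \sum_(A : {set 'I_n}) \sum_(B : {set 'I_n} | (A :&: B == finset.set0) && (A :|: B == C))
               bsign A B * x A * y B].

Definition gscale (c : R) (x : GA) : GA := [ffun A => c * x A].

Definition gsc (c : R) : GA := [ffun A => if A == finset.set0 then c else 0].
Definition gone : GA := gsc 1.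

Definition gpow (x : GA) (r : nat) : GA := iter r (gmul x) gone.

(** e^X = sum_r X^r / r!, the limit being taken coordinatewise
    (equivalent to convergence in the finite-dimensional space GA) *)
Definition gexp (X : GA) : GA :=
  [ffun A => limn (fun N : nat => ((\sum_(r < N) gscale (r`!%:R)^-1 (gpow X r) : GA) A : R))].

Definition is_vector (v : GA) : Prop := forall A : {set 'I_n}, #|A| != 1%N -> v A = 0.

Definition is_blade (B : GA) : Prop :=
  exists (a : R) (vs : seq GA), (forall v, v \in vs -> is_vector v) /\
    B = gscale a (foldr gwedge gone vs).

Definition coorthogonal (A B : GA) : Prop :=
  gmul A B = gmul B A \/ gmul A B = - gmul B A.

Definition in_I (i : GA) : Prop := exists c : R, gmul i i = gsc c /\ c < 0.

(** inverse (meaningful for invertible elements) *)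
Definition ginv (x : GA) : GA :=
  xget 0 (fun y : GA => gmul x y = gone /\ gmul y x = gone).

(** A_{c^0(B)} (b = false) and A_{c^1(B)} (b = true) *)
Definition cproj (b : bool) (B A : GA) : GA :=
  gscale (2%:R)^-1 (A + (if b then - gmul (gmul (ginv B) A) B else gmul (gmul (ginv B) A) B)).

(** A_{c^j(B_1,...,B_d)} = ((A_{c^{j_1}(B_1)})_{c^{j_2}(B_2)} ...)_{c^{j_d}(B_d)} *)
Definition cproj_multi (d : nat) (j : {ffun 'I_d -> bool}) (Bs : 'I_d -> GA) (A : GA) : GA :=
  foldl (fun X l => cproj (j l) (Bs l) X) A (enum 'I_d).

(** |h| = sqrt(-h^2), h^2 being a scalar for h in I^{p,q} *)
Definition gabs (h : GA) : R := Num.sqrt (- (gmul h h) finset.set0).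

Inductive gkind := GExp | GCos | GSin | GZero.

Definition gfun (k : gkind) (h : GA) : GA :=
  match k with
  | GExp => gexp h
  | GCos => gsc (cos (gabs h))
  | GSin => gscale (sin (gabs h) / gabs h) h
  | GZero => 0
  end.

Definition gprod (d : nat) (F : 'I_d -> GA) : GA := \big[gmul/gone]_(l < d) F l.

End GA.

(* Every f_l squares to a negative scalar c_l, so it is invertible with inverse
   f_l / c_l, and each of the four functions satisfies g(h) = alpha(|h|) + beta(|h|) h
   (for e^h this is Euler's formula, as h^2 = -|h|^2).  The iterated projection
   A_{c^j} commutes (j_l = 0) or anticommutes (j_l = 1) with every f_l: coorthogonality
   makes each projection preserve the relations established by the earlier ones.
   Summing over j recovers A, because A_{c^0(B)} + A_{c^1(B)} = A.  Hence
   g_l(-f_l) Y = Y g_l(-(-1)^{j_l} f_l) for Y = A_{c^j}, and pushing Y through the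
   product one factor at a time gives the identity. *)

From HB Require Import structures.
From mathcomp Require Import all_boot all_order all_algebra ring.
From mathcomp Require Import boolp classical_sets reals topology normedtype sequences trigo.
From mathcomp Require Import finset.
Set Implicit Arguments.
Unset Strict Implicit.
Unset Printing Implicit Defensive.
Import Order.TTheory GRing.Theory Num.Theory.
Local Open Scope ring_scope.

Section BladeSigns.
Variables (R : realType) (p q : nat).
Local Notation n := (p + q)%N.
Local Notation symdiff := (@symdiff p q).
Local Notation bsign := (@bsign R p q).

Lemma symdiffK (A B : {set 'I_n}) : symdiff A (symdiff A B) = B.
Proof. by apply/setP => x; rewrite !inE; case: (x \in A); case: (x \in B). Qed.

Lemma symdiffC (A B : {set 'I_n}) : symdiff A B = symdiff B A.
Proof. by apply/setP => x; rewrite !inE; case: (x \in A); case: (x \in B). Qed.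

Lemma symdiffA (A B C : {set 'I_n}) :
  symdiff A (symdiff B C) = symdiff (symdiff A B) C.
Proof.
by apply/setP => x; rewrite !inE; case: (x \in A); case: (x \in B); case: (x \in C).
Qed.

Lemma symdiff0s (A : {set 'I_n}) : symdiff set0 A = A.
Proof. by apply/setP => x; rewrite !inE; case: (x \in A). Qed.

Lemma symdiffss (A : {set 'I_n}) : symdiff A A = set0.
Proof. by apply/setP => x; rewrite !inE; case: (x \in A). Qed.

Lemma symdiff_eq (A B C : {set 'I_n}) : (symdiff A B == C) = (B == symdiff A C).
Proof. by apply/eqP/eqP => [<-|->]; rewrite symdiffK. Qed.

Lemma prod_symdiff (X Y : {set 'I_n}) (f : 'I_n -> R) :
  (forall i, f i * f i = 1) ->
  \prod_(i in symdiff X Y) f i = \prod_(i in X) f i * \prod_(i in Y) f i.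
Proof.
move=> f2; rewrite (big_setID (A := X) Y) [\prod_(i in Y) _](big_setID X) /=.
rewrite (eq_bigl [predU X :\: Y & Y :\: X]); last by move=> x; rewrite !inE.
rewrite bigU /=; last by apply/pred0P => x /=; rewrite !inE; case: (x \in X); case: (x \in Y).
rewrite setIC mulrACA -big_split /=.
by rewrite [\prod_(i in Y :&: X) _]big1 ?mul1r.
Qed.

(* [bsign A B] factors over the pairs (i, j) of A x B: an inversion j < i contributes
   -1, and i = j contributes the square of e_i. *)
Definition tau (i j : 'I_n) : R :=
  (if (j < i)%N then -1 else 1) * (if i == j then (if (i < p)%N then 1 else -1) else 1).

Lemma tauK i j : tau i j * tau i j = 1.
Proof.
have sq1 (b : bool) (x : R) : x * x = 1 -> (if b then x else 1) * (if b then x else 1) = 1.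
  by case: b => //; rewrite mulr1.
rewrite /tau mulrACA sq1 ?mulrNN ?mulr1 // mul1r sq1 //.
by case: (i < p)%N; rewrite ?mulrNN mulr1.
Qed.

Lemma bsignE (A B : {set 'I_n}) : bsign A B = \prod_(i in A) \prod_(j in B) tau i j.
Proof.
rewrite /bsign /tau.
under [RHS]eq_bigr => i _ do rewrite big_split /=.
rewrite big_split /= -prodr_const pair_big_dep /=; congr (_ * _).
  rewrite big_mkcond [RHS]big_mkcond; apply: eq_bigr => ij _; rewrite !inE andbA.
  by case: ((ij.1 \in A) && (ij.2 \in B)).
rewrite (eq_bigl (fun i => (i \in A) && (i \in B))) => [|i]; last by rewrite inE.
rewrite big_mkcondr; apply: eq_bigr => i _.
case: (boolP (i \in B)) => iB.
  rewrite (bigD1 i) //= eqxx big1 ?mulr1 // => j /andP[_ /negPf].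
  by rewrite eq_sym => ->.
by rewrite big1 // => j jB; case: eqP => // eij; rewrite eij jB in iB.
Qed.

Lemma bsign_symdiffl A B C : bsign (symdiff A B) C = bsign A C * bsign B C.
Proof.
by rewrite !bsignE prod_symdiff // => i; rewrite -big_split big1 // => j _; apply: tauK.
Qed.

Lemma bsign_symdiffr A B C : bsign A (symdiff B C) = bsign A B * bsign A C.
Proof.
by rewrite !bsignE -big_split; apply: eq_bigr => i _; rewrite prod_symdiff // => j; apply: tauK.
Qed.

Lemma bsign0s C : bsign set0 C = 1.
Proof. by rewrite bsignE big_set0. Qed.

Lemma bsigns0 C : bsign C set0 = 1.
Proof. by rewrite bsignE big1 // => i _; rewrite big_set0. Qed.

End BladeSigns.

Section GeometricProduct.
Variables (R : realType) (p q : nat).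
Local Notation n := (p + q)%N.
Local Notation GA := (GA R p q).
Local Notation gmul := (@gmul R p q).
Local Notation gscale := (@gscale R p q).
Local Notation symdiff := (@symdiff p q).
Local Notation bsign := (@bsign R p q).

Lemma gmulE (x y : GA) C :
  gmul x y C = \sum_A bsign A (symdiff A C) * x A * y (symdiff A C).
Proof.
rewrite ffunE; apply: eq_bigr => A _.
rewrite (eq_bigl (pred1 (symdiff A C))) => [|B]; last by rewrite /= symdiff_eq.
by rewrite big_pred1_eq.
Qed.

Lemma gmulA : associative gmul.
Proof.
move=> x y z; apply/esym/ffunP => D; rewrite !gmulE.
under eq_bigr => C _ do rewrite gmulE mulr_sumr mulr_suml.
rewrite exchange_big /=; apply: eq_bigr => A _.
rewrite (reindex_inj (can_inj (symdiffK A))) gmulE mulr_sumr.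
apply: eq_bigr => B _; rewrite !symdiffK.
have -> : symdiff B (symdiff A D) = symdiff (symdiff A B) D by rewrite symdiffA (symdiffC B).
set E := symdiff (symdiff A B) D.
have -> : symdiff A D = symdiff B E by rewrite /E symdiffA (symdiffC A B) symdiffK.
rewrite bsign_symdiffl bsign_symdiffr; ring.
Qed.

Lemma gmulDl : left_distributive gmul +%R.
Proof.
move=> x y z; apply/ffunP => C; rewrite [LHS]gmulE ffunE !gmulE -big_split.
by apply: eq_bigr => A _; rewrite ffunE /=; ring.
Qed.

Lemma gmulDr : right_distributive gmul +%R.
Proof.
move=> x y z; apply/ffunP => C; rewrite [LHS]gmulE ffunE !gmulE -big_split.
by apply: eq_bigr => A _; rewrite ffunE /=; ring.
Qed.

Lemma gscale_mull a (x y : GA) : gscale a (gmul x y) = gmul (gscale a x) y.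
Proof.
apply/ffunP => C; rewrite ffunE !gmulE mulr_sumr.
by apply: eq_bigr => A _; rewrite ffunE; ring.
Qed.

Lemma gscale_mulr a (x y : GA) : gscale a (gmul x y) = gmul x (gscale a y).
Proof.
apply/ffunP => C; rewrite ffunE !gmulE mulr_sumr.
by apply: eq_bigr => A _; rewrite ffunE; ring.
Qed.

Lemma gsc_mull c (x : GA) : gmul (gsc p q c) x = gscale c x.
Proof.
apply/ffunP => C; rewrite gmulE (bigD1 set0) //= big1 => [|A /negPf A0].
  by rewrite !ffunE eqxx symdiff0s bsign0s addr0 mul1r.
by rewrite ffunE A0 mulr0 mul0r.
Qed.

Lemma gsc_mulr c (x : GA) : gmul x (gsc p q c) = gscale c x.
Proof.
apply/ffunP => C; rewrite gmulE (bigD1 C) //= big1 => [|A AC].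
  by rewrite !ffunE symdiffss eqxx bsigns0 addr0 mul1r mulrC.
have AC0 : symdiff A C != set0.
  by apply: contra AC => /eqP AC0; rewrite -(symdiffK A C) AC0 symdiffC symdiff0s.
by rewrite ffunE (negPf AC0) mulr0.
Qed.

Lemma gscaleA a b (x : GA) : gscale a (gscale b x) = gscale (a * b) x.
Proof. by apply/ffunP => A; rewrite !ffunE mulrA. Qed.

Lemma gscale1 : left_id 1 gscale.
Proof. by move=> x; apply/ffunP => A; rewrite !ffunE mul1r. Qed.

Lemma gscaleDr : right_distributive gscale +%R.
Proof. by move=> a x y; apply/ffunP => A; rewrite !ffunE mulrDr. Qed.

Lemma gscaleDl (x : GA) : {morph gscale^~ x : a b / a + b}.
Proof. by move=> a b; apply/ffunP => A; rewrite !ffunE mulrDl. Qed.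

Lemma gone_mull : left_id (gone R p q) gmul.
Proof. by move=> x; rewrite gsc_mull gscale1. Qed.

Lemma gone_mulr : right_id (gone R p q) gmul.
Proof. by move=> x; rewrite gsc_mulr gscale1. Qed.

Lemma gone_neq0 : gone R p q != 0.
Proof. by apply/eqP => /ffunP /(_ set0); rewrite !ffunE eqxx; apply/eqP/oner_neq0. Qed.

End GeometricProduct.

(* A type alias is needed: [{ffun _ -> R}] already carries the pointwise ring structure. *)
Definition galg (R : realType) (p q : nat) : Type := GA R p q.

HB.instance Definition _ (R : realType) (p q : nat) := GRing.Zmodule.on (galg R p q).
HB.instance Definition _ (R : realType) (p q : nat) :=
  GRing.Zmodule_isLmodule.Build R (galg R p q)
    (@gscaleA R p q) (@gscale1 R p q) (@gscaleDr R p q) (@gscaleDl R p q).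
HB.instance Definition _ (R : realType) (p q : nat) :=
  GRing.Zmodule_isNzRing.Build (galg R p q) (@gmulA R p q)
    (@gone_mull R p q) (@gone_mulr R p q) (@gmulDl R p q) (@gmulDr R p q) (@gone_neq0 R p q).
HB.instance Definition _ (R : realType) (p q : nat) :=
  GRing.Lmodule_isLalgebra.Build R (galg R p q) (@gscale_mull R p q).
HB.instance Definition _ (R : realType) (p q : nat) :=
  GRing.Lalgebra_isAlgebra.Build R (galg R p q) (@gscale_mulr R p q).

Section GalgConversions.
Variables (R : realType) (p q : nat).
Local Notation G := (galg R p q).

Lemma gmul_galg (x y : G) : gmul x y = x * y.
Proof. by []. Qed.

Lemma gscale_galg a (x : G) : gscale a x = a *: x.
Proof. by []. Qed.

Lemma gprod_galg d (F : 'I_d -> G) : gprod F = \prod_(l < d) F l.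
Proof. by []. Qed.

Lemma gsc_galg (c : R) : gsc p q c = c%:A :> G.
Proof. by apply/ffunP => A; rewrite !ffunE; case: (_ == _); rewrite ?mulr1 ?mulr0. Qed.

End GalgConversions.

Section Projections.
Variables (R : realType) (p q : nat).
Local Notation G := (galg R p q).

Definition sign_comm (b : bool) (x y : G) := x * y = (-1) ^+ b *: (y * x).

Lemma coorthogonal_sign_comm (x y : G) : coorthogonal x y -> exists b, sign_comm b x y.
Proof. by case=> xy; [exists false | exists true]; rewrite /sign_comm scaler_sign. Qed.

Lemma sign_commZ b x y a : sign_comm b x y -> sign_comm b x (a *: y).
Proof. by rewrite /sign_comm -scalerAr -scalerAl => ->; rewrite !scalerA mulrC. Qed.

Lemma sign_commD b x y z : sign_comm b x y -> sign_comm b x z -> sign_comm b x (y + z).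
Proof. by rewrite /sign_comm mulrDr mulrDl scalerDr => -> ->. Qed.

Lemma sign_commM b b' x y z :
  sign_comm b x y -> sign_comm b' x z -> sign_comm (b (+) b') x (y * z).
Proof.
rewrite /sign_comm => xy xz.
by rewrite mulrA xy -scalerAl -[y * x * z]mulrA xz !scalerAr scalerA signr_addb mulrA.
Qed.

Variables (B : G) (c : R).
Hypotheses (sqrB : B * B = c%:A) (c_neq0 : c != 0).

Lemma ginv_sqr_scalar : ginv B = c^-1 *: B.
Proof.
have invB : B * (c^-1 *: B) = 1 /\ (c^-1 *: B) * B = 1.
  by rewrite -scalerAr -scalerAl sqrB scalerA mulVf ?scale1r.
apply: (@xget_unique _ _ (fun y : G => B * y = 1 /\ y * B = 1) _ (invB)) => y [_ yB].
by rewrite -[y]mulr1 -invB.1 mulrA yB mul1r.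
Qed.

Lemma cprojE b (X : G) : cproj b B X = 2^-1 *: (X + ((-1) ^+ b / c) *: (B * X * B)).
Proof.
rewrite /cproj ginv_sqr_scalar !gmul_galg gscale_galg -[in RHS]scalerA -!scalerAl.
by case: b; rewrite ?scaleN1r ?scale1r.
Qed.

Lemma cproj_sign_comm b (X : G) : sign_comm b B (cproj b B X).
Proof.
have BBXB : B * (B * X * B) = c *: (X * B) by rewrite !mulrA sqrB mulr_algl scalerAl.
have BXBB : B * X * B * B = c *: (B * X) by rewrite -mulrA sqrB mulr_algr.
rewrite cprojE; apply: sign_commZ; rewrite /sign_comm.
rewrite mulrDr mulrDl -scalerAr -scalerAl BBXB BXBB !scalerA scalerDr scalerA.
by rewrite divfK // addrC -signr_addb addbb scale1r.
Qed.

Lemma cproj_add (X : G) : (cproj false B X : G) + cproj true B X = X.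
Proof.
rewrite !cprojE -scalerDr addrACA -scalerDl expr1 mulNr subrr scale0r addr0.
by rewrite -mulr2n -scaler_nat scalerA mulVf ?pnatr_eq0 // scale1r.
Qed.

Lemma sign_comm_cproj b b' k (B' X : G) :
  sign_comm b' B' B -> sign_comm b B' X -> sign_comm b B' (cproj k B X).
Proof.
move=> B'B B'X; rewrite cprojE; apply/sign_commZ/sign_commD => //.
by apply/sign_commZ; rewrite -[b](addKb b') addbC; apply/sign_commM/B'B/sign_commM.
Qed.
End Projections.

Section MultiProjection.
Variables (R : realType) (p q d : nat).
Local Notation G := (galg R p q).
Variable Bs : 'I_d -> G.
Hypothesis sqr_Bs : forall l, exists2 c, Bs l * Bs l = c%:A & c != 0.

Definition cproj_seq (j : {ffun 'I_d -> bool}) (s : seq 'I_d) (X : G) : G :=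
  foldl (fun X l => cproj (j l) (Bs l) X) X s.

Lemma cproj_seq_rcons (j : {ffun 'I_d -> bool}) s a X :
  cproj_seq j (rcons s a) X = cproj (j a) (Bs a) (cproj_seq j s X).
Proof. exact: foldl_rcons. Qed.

Lemma cproj_seq_sign_comm (j : {ffun 'I_d -> bool}) s X l :
  (forall l', exists b, sign_comm b (Bs l) (Bs l')) ->
  l \in s -> sign_comm (j l) (Bs l) (cproj_seq j s X).
Proof.
move=> coorth; elim/last_ind: s => [//|s a IH]; rewrite cproj_seq_rcons mem_rcons inE.
have [c sqrc c_neq0] := sqr_Bs a.
case: eqP => [-> _|_ /= ls]; first exact: (cproj_sign_comm sqrc c_neq0).
by have [b Bla] := coorth a; exact: (sign_comm_cproj sqrc c_neq0 _ Bla (IH ls)).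
Qed.

Lemma eq_cproj_seq (j j' : {ffun 'I_d -> bool}) s X :
  {in s, j =1 j'} -> cproj_seq j s X = cproj_seq j' s X.
Proof.
elim: s X => [//|a s IH] X jj' /=.
by rewrite /cproj_seq /= jj' ?mem_head //; apply: IH => k ks; apply: jj'; rewrite inE ks orbT.
Qed.

Definition flip_at (l : 'I_d) (j : {ffun 'I_d -> bool}) : {ffun 'I_d -> bool} :=
  [ffun k => if k == l then ~~ j k else j k].

Lemma flip_atK l : involutive (flip_at l).
Proof. by move=> j; apply/ffunP => k; rewrite !ffunE; case: eqP => //; rewrite negbK. Qed.

Lemma sum_cproj_seq s X : uniq s ->
  \sum_(j : {ffun 'I_d -> bool}) cproj_seq j s X = (2 ^ (d - size s))%:R *: X.
Proof.
elim/last_ind: s => [_|s a IH].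
  by rewrite sumr_const card_ffun card_bool card_ord subn0 scaler_nat.
rewrite rcons_uniq => /andP[as_ us].
have lt_s_d : (size s < d)%N.
  have := max_card (mem (rcons s a)).
  by rewrite card_ord (card_uniqP _) ?size_rcons // rcons_uniq as_ us.
under eq_bigr => j _ do rewrite cproj_seq_rcons.
(* Pairing [j] with [flip_at a j] groups the two projections along [Bs a], which add
   up to the previous term. *)
pose F (j : {ffun 'I_d -> bool}) : G := cproj (j a) (Bs a) (cproj_seq j s X).
have flipF (j : {ffun 'I_d -> bool}) : F j + F (flip_at a j) = cproj_seq j s X.
  rewrite /F (@eq_cproj_seq (flip_at a j) j) => [|k ks]; last first.
    by rewrite ffunE; case: eqP => // ka; move: as_; rewrite -ka ks.
  have [c sqrc c_neq0] := sqr_Bs a.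
  rewrite ffunE eqxx; case: (j a); rewrite ?(cproj_add sqrc c_neq0) //.
  by rewrite addrC (cproj_add sqrc c_neq0).
have -> : \sum_j F j = 2^-1 *: \sum_j (F j + F (flip_at a j)).
  have flip_sum : \sum_j F (flip_at a j) = \sum_j F j.
    by apply/esym/reindex_inj/can_inj/flip_atK.
  by rewrite big_split /= flip_sum -mulr2n -scaler_nat scalerA mulVf ?pnatr_eq0 // scale1r.
rewrite (eq_bigr _ (fun j _ => flipF j)) IH // scalerA size_rcons.
by rewrite -(subnSK lt_s_d) expnS natrM mulrA mulVf ?pnatr_eq0 // mul1r.
Qed.

Lemma sum_cproj_multi X : \sum_(j : {ffun 'I_d -> bool}) (cproj_multi j Bs X : G) = X.
Proof. by rewrite (sum_cproj_seq _ (enum_uniq _)) size_enum_ord subnn expn0 scale1r. Qed.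

End MultiProjection.

Section Exponential.
Variables (R : realType) (p q : nat).
Local Notation G := (galg R p q).

Lemma gpow_exprn (h : G) r : gpow h r = h ^+ r.
Proof. by elim: r => [|r IH]; rewrite ?expr0 // exprS /gpow iterS -/(gpow h r) IH. Qed.

Variables (h : G) (c : R).
Hypothesis sqrh : h * h = c%:A.

Lemma gabs_sqr : gabs h = Num.sqrt (- c).
Proof. by rewrite /gabs gmul_galg sqrh !ffunE eqxx mulr1. Qed.

Lemma expr_double_sqr k : h ^+ k.*2 = (c ^+ k)%:A.
Proof. by rewrite -mul2n exprM expr2 sqrh exprZn expr1n. Qed.

Lemma expr_doubleS_sqr k : h ^+ k.*2.+1 = c ^+ k *: h.
Proof. by rewrite exprS expr_double_sqr mulr_algr. Qed.

Hypothesis c_lt0 : c < 0.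
Local Notation a := (Num.sqrt (- c)).

Lemma sqrtN_neq0 : a != 0.
Proof. by rewrite sqrtr_eq0 -ltNge oppr_gt0. Qed.

Lemma exp_series_term r :
  (r`!%:R)^-1 *: h ^+ r = (cos_coeff a r)%:A + (sin_coeff a r / a) *: h.
Proof.
have sqra k : a ^+ k.*2 = (- c) ^+ k by rewrite -mul2n exprM sqr_sqrtr ?oppr_ge0 ?ltW.
have signc k : (-1) ^+ k * (- c) ^+ k = c ^+ k by rewrite -exprMn mulN1r opprK.
rewrite -[r](odd_double_half r); case: (odd r); rewrite ?add1n ?add0n; set k := r./2.
  rewrite cos_coeff_odd expr_doubleS_sqr sin_coeffE /= odd_double /= doubleK.
  rewrite exprS sqra scalerA scale0r add0r; congr (_ *: _).
  by rewrite mul1r [a * _]mulrC mulrA mulfK ?sqrtN_neq0 // mulrAC signc mulrC.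
rewrite sin_coeff_even expr_double_sqr cos_coeffE /= odd_double /= doubleK sqra.
by rewrite mul0r scale0r addr0 scalerA mul1r mulrAC signc mulrC.
Qed.

Lemma gexp_euler : gexp h = (cos a)%:A + (sin a / a) *: h.
Proof.
have partial_sum N : (\sum_(r < N) gscale (r`!%:R)^-1 (gpow h r) : G) =
    (series (cos_coeff a) N)%:A + (series (sin_coeff a) N / a) *: h.
  rewrite /series /= !big_mkord mulr_suml !scaler_suml -big_split /=.
  by apply: eq_bigr => r _; rewrite gscale_galg gpow_exprn exp_series_term.
apply/ffunP => A; rewrite ffunE.
under eq_fun => N do rewrite partial_sum !ffunE.
rewrite !ffunE; apply: (@cvg_lim R^o); first exact: Rhausdorff.
apply: cvgD; apply: cvgMr_tmp; last apply: cvgMr_tmp.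
  by rewrite cos.unlock; apply: is_cvg_series_cos_coeff.
by rewrite sin.unlock; apply: is_cvg_series_sin_coeff.
Qed.
End Exponential.

Section GFunctions.
Variables (R : realType) (p q : nat).
Local Notation G := (galg R p q).

Definition gfun_even (k : gkind) (a : R) : R :=
  match k with GExp | GCos => cos a | _ => 0 end.

Definition gfun_odd (k : gkind) (a : R) : R :=
  match k with GExp | GSin => sin a / a | _ => 0 end.

Lemma gfunE k (h : G) c : h * h = c%:A -> c < 0 ->
  (gfun k h : G) = (gfun_even k (gabs h))%:A + gfun_odd k (gabs h) *: h.
Proof.
move=> sqrh c_lt0.
case: k => /=; rewrite ?(gabs_sqr sqrh) ?scale0r ?addr0 ?add0r //.
  exact: gexp_euler.
exact: gsc_galg.
Qed.

Lemma gfun_sign_comm k b (B X : G) c : B * B = c%:A -> c < 0 -> sign_comm b B X ->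
  (gfun k (- B) : G) * X = X * (gfun k (- ((-1) ^+ b *: B)) : G).
Proof.
move=> sqrB c_lt0 BX.
have sqrN : - B * - B = c%:A by rewrite mulrNN.
have sqrNZ : - ((-1) ^+ b *: B) * - ((-1) ^+ b *: B) = c%:A.
  by rewrite mulrNN -scalerAl -scalerAr scalerA -signr_addb addbb scale1r.
rewrite (gfunE k sqrN c_lt0) (gfunE k sqrNZ c_lt0) (gabs_sqr sqrN) (gabs_sqr sqrNZ).
by rewrite mulrDl mulrDr mulr_algl mulr_algr -scalerAl -scalerAr mulNr mulrN -scalerAr BX.
Qed.

End GFunctions.

Lemma prodr_mul_intertwine (Rg : pzRingType) (I : Type) (r : seq I) (F F' : I -> Rg) x :
  (forall i, F i * x = x * F' i) -> (\prod_(i <- r) F i) * x = x * \prod_(i <- r) F' i.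
Proof.
move=> FF'; elim: r => [|i r IH]; first by rewrite !big_nil mul1r mulr1.
by rewrite !big_cons -mulrA IH !mulrA FF'.
Qed.

Theorem lemma4p7 (R : realType) (p q m d : nat)
    (f : 'I_d -> 'rV[R]_m -> 'rV[R]_m -> GA R p q)
    (g : 'I_d -> gkind)
    (hI : forall l x u, in_I (f l x u))
    (hblade : forall l x u, is_blade (f l x u))
    (hcoorth : forall l l' x u, coorthogonal (f l x u) (f l' x u)) :
  forall (A : GA R p q) (x u : 'rV[R]_m),
    gmul (gprod (fun l => gfun (g l) (- f l x u))) A =
    \sum_(j : {ffun 'I_d -> bool})
       gmul (cproj_multi j (fun l => f l x u) A)
            (gprod (fun l => gfun (g l) (- gscale ((-1) ^+ nat_of_bool (j l)) (f l x u)))).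
Proof.
move=> A x u; pose B l : galg R p q := f l x u.
have sqrB l : exists2 c, B l * B l = c%:A & c < 0.
  by have [c [sqrc c_lt0]] := hI l x u; exists c; rewrite // -gsc_galg.
have sqrB0 l : exists2 c, B l * B l = c%:A & c != 0.
  by have [c sqrc /ltr0_neq0] := sqrB l; exists c.
have coB l l' : exists b, sign_comm b (B l) (B l').
  exact/coorthogonal_sign_comm/hcoorth.
rewrite -{1}(sum_cproj_multi sqrB0 A) gmul_galg mulr_sumr; apply: eq_bigr => j _.
rewrite !gprod_galg gmul_galg; apply: (prodr_mul_intertwine (Rg := galg R p q)) => l.
have [c sqrc c_lt0] := sqrB l.
exact: (gfun_sign_comm _ sqrc c_lt0 (cproj_seq_sign_comm sqrB0 j _ (coB l) (mem_enum _ l))).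
Qed.
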